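(* Let $n\ge 3$ and $Q\ge 1$ be integers and $T>0$. Consider the Poisson process stochastic block model with parameter $\theta=(\pi,\alpha)$, where $\pi=(\pi_1,\dots,\pi_Q)$ has $\pi_q>0$, $\sum_q\pi_q=1$, and $\alpha=\{\alpha^{(q,l)}\}$ is a collection of nonnegative integrable functions on $[0,T]$ (indexed by $q,l\in\{1,\dots,Q\}$ in the directed setup, and by $q\le l$ in the undirected setup, with $\alpha^{(l,q)}:=\alpha^{(q,l)}$). Assume that in the directed setup the set $\{\alpha^{(q,l)}\}_{q,l=1,\dots,Q}$ contains exactly $Q^2$ distinct functions (resp. in the undirected setup exactly $Q(Q+1)/2$ distinct functions), where two functions are considered equal if they coincide almost everywhere on $[0,T]$. Then $\theta$ is identifiable on $[0,T]$ up to label switching from the distribution $\mathrm{pr}_\theta$: for every parameter $\tilde\theta=(\tilde\pi,\tilde\alpha)$ of the same form with $\mathrm{pr}_\theta=\mathrm{pr}_{\tilde\theta}$, there exists a permutation $\sigma$ of $\{1,\dots,Q\}$ such that $\pi_q=\tilde\pi_{\sigma(q)}$ and $\alpha^{(q,l)}=\tilde\alpha^{(\sigma(q),\sigma(l))}$ almost everywhere on $[0,T]$ for all $q,l=1,\dots,Q$.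
   Context: Poisson process stochastic block model: there are $n$ individuals. In the directed setup the set of dyads is $\mathcal R=\{(i,j): i,j\in\{1,\dots,n\}, i\neq j\}$; in the undirected setup dyads are unordered pairs $\{i,j\}$ with $i\ne j$. Latent variables $Z_1,\dots,Z_n$ are i.i.d. with values in $\{1,\dots,Q\}$ and $\mathrm{pr}(Z_1=q)=\pi_q$. Conditionally on $(Z_1,\dots,Z_n)$, the counting processes $N_{i,j}(\cdot)$ on $[0,T]$, one per dyad, are independent inhomogeneous Poisson processes, $N_{i,j}$ having intensity $\alpha^{(Z_i,Z_j)}$. $\mathrm{pr}_\theta$ denotes the (unconditional) distribution of the multivariate counting process $\{N_{i,j}\}$ over all dyads. *)

From mathcomp Require Import all_boot all_order all_algebra all_fingroup.
From mathcomp Require Import all_classical all_reals all_analysis.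
Set Implicit Arguments. Unset Strict Implicit. Unset Printing Implicit Defensive.
Import Order.TTheory GRing.Theory Num.Theory.
Import numFieldNormedType.Exports.
Local Open Scope classical_set_scope.
Local Open Scope ring_scope.

Section PPSBM.
Variable R : realType.

Definition pois_pmf (lam : R) (k : nat) : R := lam ^+ k / k`!%:R * expR (- lam).

(* the dyads: ordered pairs i <> j (directed) or unordered pairs {i,j}, i<>j,
   represented by i < j (undirected) *)
Definition is_dyad (directed : bool) n (i j : 'I_n) : bool :=
  if directed then i != j else (i < j)%N.

Definition cumint (f : R -> R) (s t : R) : R :=
  \int[@lebesgue_measure R]_(x in [set` `[s, t]]) f x.

Definition ae_eq_on (T : R) (f g : R -> R) : Prop :=
  f = g %[ae (@lebesgue_measure R) in [set` `[0, T]]].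

Definition valid_param (directed : bool) (Q : nat) (T : R)
    (pi : 'I_Q -> R) (alpha : 'I_Q -> 'I_Q -> R -> R) : Prop :=
  [/\ (forall q, 0 < pi q),
      \sum_(q < Q) pi q = 1,
      (forall q l x, 0 <= x <= T -> 0 <= alpha q l x),
      (forall q l, (@lebesgue_measure R).-integrable [set` `[0, T]]
                     (fun x => (alpha q l x)%:E))
    & (~~ directed -> forall q l, alpha l q = alpha q l)].

(* distinctness (up to a.e. equality) of the intensities:
   Q^2 distinct functions (directed), Q(Q+1)/2 distinct functions (undirected) *)
Definition distinct_intensities (directed : bool) (Q : nat) (T : R)
    (alpha : 'I_Q -> 'I_Q -> R -> R) : Prop :=
  forall q l q' l' : 'I_Q,
    (if directed then (q, l) != (q', l')
     else ((q, l) != (q', l')) && ((q, l) != (l', q'))) ->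
    ~ ae_eq_on T (alpha q l) (alpha q' l').

(* Finite-dimensional distributions of pr_theta: for a time grid
   s 0 <= s 1 <= ... <= s m, the probability that for every dyad (i,j) and
   every r < m the increment N_{ij}(s (r+1)) - N_{ij}(s r) equals k i j r. *)
Definition fdd (directed : bool) (n Q : nat)
    (pi : 'I_Q -> R) (alpha : 'I_Q -> 'I_Q -> R -> R)
    (m : nat) (s : nat -> R) (k : 'I_n -> 'I_n -> nat -> nat) : R :=
  \sum_(z : {ffun 'I_n -> 'I_Q})
    ((\prod_(i < n) pi (z i)) *
     \prod_(i < n) \prod_(j < n | is_dyad directed i j)
        \prod_(r < m) pois_pmf (cumint (alpha (z i) (z j)) (s r) (s r.+1))
                               (k i j r)).

(* pr_theta = pr_theta' on [0,T]: equality of all finite-dimensional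
   distributions of the multivariate counting process (N_{ij})_{(i,j) dyad}
   on [0,T] (processes start at 0). *)
Definition same_law (directed : bool) (n Q : nat) (T : R)
    (pi : 'I_Q -> R) (alpha : 'I_Q -> 'I_Q -> R -> R)
    (pi' : 'I_Q -> R) (alpha' : 'I_Q -> 'I_Q -> R -> R) : Prop :=
  forall (m : nat) (s : nat -> R) (k : 'I_n -> 'I_n -> nat -> nat),
    s 0%N = 0 -> (forall r, (r < m)%N -> s r <= s r.+1) -> s m <= T ->
    fdd directed pi alpha m s k = fdd directed pi' alpha' m s k.

End PPSBM.

(* Fix a finite grid of times. Conditionally on the block assignment z, the
   increments of the counting processes over the grid are independent Poisson
   variables, so the law of the increments is a finite mixture, over z, of
   products of Poisson laws whose means are the increments of the cumulative
   intensities Lambda^(z_i, z_j). Products of Poisson laws with distinct mean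
   vectors are linearly independent, hence pr_theta determines the law of the
   random pattern (Lambda^(Z_i, Z_j))_(i,j dyad). Since the intensities are
   distinct a.e., a finite grid exists on which the cumulative intensities
   separate the pairs of blocks; then, as n >= 3, an assignment is determined by
   its pattern, and comparing the patterns of constant assignments and of
   assignments using two blocks produces a permutation matching the block
   proportions and the cumulative intensities on the grid. This permutation is
   unique, so it does not depend on the grid: the cumulative intensities agree
   on all of [0, T], and by Lebesgue differentiation the intensities agree a.e. *)

From mathcomp Require Import all_boot all_order all_algebra all_fingroup.
From mathcomp Require Import all_classical all_reals all_analysis.
From mathcomp Require Import ring.

Set Implicit Arguments. Unset Strict Implicit. Unset Printing Implicit Defensive.
Import Order.TTheory GRing.Theory Num.Theory.
Import numFieldNormedType.Exports.
Local Open Scope classical_set_scope.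
Local Open Scope ring_scope.

Section cumulative_intensity.
Variable R : realType.
Notation mu := (@lebesgue_measure R).

Lemma cumint_split (f : R -> R) (a b c : R) :
  mu.-integrable `[a, c] (EFin \o f) -> a <= b -> b <= c ->
  cumint f a c = cumint f a b + cumint f b c.
Proof.
move=> fi ab bc; rewrite /cumint.
have := @Rintegral_itvB R f (BLeft a) (BRight c) b fi; rewrite !bnd_simp.
move=> /(_ ab bc); rewrite Rintegral_itv_obnd_cbnd => [<-|]; first by rewrite addrC subrK.
by apply: integrableS fi => //; apply: subset_itvr; rewrite bnd_simp.
Qed.

Lemma integrable_patch (T : R) (D : set R) (h : R -> R) : measurable D ->
  mu.-integrable `[0, T] (EFin \o h) -> mu.-integrable D (EFin \o h \_ `[0, T]).
Proof.
move=> mD hi; apply: integrableS (_ : mu.-integrable setT _) => //.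
by rewrite -restrict_EFin -integrable_mkcond.
Qed.

Lemma patch_cumint0 (T : R) (h : R -> R) : mu.-integrable `[0, T] (EFin \o h) ->
  (forall t, 0 <= t <= T -> cumint h 0 t = 0) ->
  forall y, \int[mu]_(t in `[0, y]) (h \_ `[0, T]) t = 0.
Proof.
move=> hi h0; pose hT := h \_ `[0, T].
have hT_int0 (D : set R) : (forall t, D t -> ~ (0 <= t <= T)) ->
    \int[mu]_(t in D) hT t = 0.
  move=> DT; rewrite /Rintegral integral0_eq // => t /DT tT.
  by rewrite /hT patchE memNset //= in_itv.
have hT_le y : y <= T -> \int[mu]_(t in `[0, y]) hT t = 0.
  move=> yT; have [y0|y0] := ltP y 0.
    apply: hT_int0 => t /=; rewrite in_itv /= => /andP[t0 ty].
    by have := le_trans t0 ty; rewrite leNgt y0.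
  rewrite -[RHS](h0 y) ?y0 //; apply: eq_Rintegral => t.
  rewrite inE /= in_itv /= => /andP[t0 ty].
  by rewrite /hT patchE mem_set //= in_itv /= t0 (le_trans ty yT).
move=> y; have [yT|Ty] := leP y T; first exact: hT_le.
have [T0|T0] := leP 0 T; last first.
  apply: hT_int0 => t /=; rewrite in_itv /= => /andP[t0 _] /andP[_].
  by rewrite leNgt (lt_le_trans T0 t0).
have := @Rintegral_itvB R hT (BLeft 0) (BRight y) T.
rewrite !bnd_simp => /(_ (integrable_patch (measurable_itv _) hi) T0 (ltW Ty)).
rewrite (hT_le T) // subr0 => ->.
by apply: hT_int0 => t /=; rewrite in_itv /= => /andP[Tt _] /andP[_]; rewrite leNgt Tt.
Qed.

Lemma ae_eq_on_cumint0 (T : R) (h : R -> R) :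
  mu.-integrable `[0, T] (EFin \o h) ->
  (forall t, 0 <= t <= T -> cumint h 0 t = 0) -> ae_eq_on T h (cst 0).
Proof.
move=> hi h0; have hT_loc : locally_integrable setT (h \_ `[0, T]).
  by apply: integrable_locally; rewrite ?integrable_patch.
have := FTC1 (fun y => integrable_patch (measurable_itv `[0, y]) hi) hT_loc.
have -> : (fun x => \int[mu]_(t in `[0, x]) (h \_ `[0, T]) t) = cst 0.
  by apply/funext => y; exact: patch_cumint0.
(* FTC1 only differentiates at x > 0; the point 0 is negligible. *)
have x_neq0 : \forall x \ae mu, x != 0.
  exists [set 0]; split; [exact: measurable_set1|exact: lebesgue_measure_set1|].
  by move=> x /= /negP; rewrite negbK => /eqP.
apply: (filterS2 (ae_filter_ringOfSetsType mu) _ x_neq0) => x x_neq0' + xT.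
move: (xT) => /= /[!in_itv] /= /andP[x0 _].
case=> [|_]; first by rewrite lte_fin lt_neqAle eq_sym x_neq0' x0.
by rewrite derive1_cst patchE mem_set.
Qed.

Lemma ae_eq_on_cumint (T : R) (f g : R -> R) :
  mu.-integrable `[0, T] (EFin \o f) -> mu.-integrable `[0, T] (EFin \o g) ->
  (forall t, 0 <= t <= T -> cumint f 0 t = cumint g 0 t) -> ae_eq_on T f g.
Proof.
move=> fi gi fg.
have fgi : mu.-integrable `[0, T] (EFin \o (f \- g)).
  by apply: eq_integrable (integrableB _ fi gi) => //= x _; rewrite EFinB.
have /ae_eq_on_cumint0 : forall t, 0 <= t <= T -> cumint (f \- g) 0 t = 0.
  move=> t /andP[t0 tT]; rewrite /cumint RintegralB //.
  - by rewrite -!/(cumint _ _ _) fg ?t0 ?subrr.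
  - by apply: integrableS fi => //; apply: subset_itvl; rewrite bnd_simp.
  - by apply: integrableS gi => //; apply: subset_itvl; rewrite bnd_simp.
move=> /(_ fgi); apply: filterS; first exact: (ae_filter_ringOfSetsType mu).
by move=> x fgx xT; apply/eqP; rewrite -subr_eq0; apply/eqP/fgx.
Qed.

Definition grid (T : R) (m : nat) (s : nat -> R) : Prop :=
  [/\ s 0%N = 0, forall r, (r < m)%N -> s r <= s r.+1 & s m <= T].

Lemma grid_bounds (T : R) m s : grid T m s -> forall r, (r <= m)%N -> 0 <= s r <= T.
Proof.
case=> s0 s_step smT.
have s_le : {in [pred i | (i <= m)%N] &, {homo s : i j / (i <= j)%N >-> i <= j}}.
  apply: homo_leq_in => [x|y x z|i j _ jm k|i _]; [exact: lexx|exact: le_trans| |].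
    by rewrite !inE in jm * => /andP[_ /ltnW/leq_trans]; apply.
  by rewrite inE; exact: s_step.
move=> r rm; rewrite -{1}s0 s_le ?inE //=.
by apply: le_trans smT; apply: s_le; rewrite ?inE.
Qed.

Lemma cumint_grid (T : R) (f : R -> R) m s : grid T m s ->
  mu.-integrable `[0, T] (EFin \o f) ->
  forall r, (r <= m)%N -> cumint f 0 (s r) = \sum_(u < r) cumint f (s u) (s u.+1).
Proof.
move=> g fi; have [s0 s_step _] := g; elim=> [_|r IH rm].
  by rewrite big_ord0 s0 /cumint set_itv1 Rintegral_set1.
have /andP[sr0 _] := grid_bounds g (ltnW rm).
have /andP[_ sr1T] := grid_bounds g rm.
rewrite big_ord_recr /= -IH ?(ltnW rm) //; apply: cumint_split (s_step _ rm) => //.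
by apply: integrableS fi => //; apply: subset_itvl; rewrite bnd_simp.
Qed.

Lemma grid_through (T : R) (L : seq R) : 0 <= T ->
  (forall t, t \in L -> 0 <= t <= T) ->
  exists m s, grid T m s /\ forall t, t \in L -> exists2 r, (r <= m)%N & s r = t.
Proof.
move=> T0 LT; pose sL := sort <=%R (0 :: L).
have sL_sorted : sorted <=%R sL by apply: sort_sorted => x y; exact: le_total.
have size_sL : size sL = (size L).+1 by rewrite size_sort.
have sL_bounds r : (r <= size L)%N -> 0 <= nth 0 sL r <= T.
  move=> rm; have : nth 0 sL r \in sL by rewrite mem_nth ?size_sL.
  by rewrite mem_sort inE => /orP[/eqP ->|/LT //]; rewrite lexx.
have sL_le i j : (i <= j <= size L)%N -> nth 0 sL i <= nth 0 sL j.
  move=> /andP[ij jm]; apply: le_sorted_leq_nth => //; rewrite inE size_sL ltnS //.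
  exact: leq_trans jm.
have sL_nth t : t \in sL -> exists2 r, (r <= size L)%N & nth 0 sL r = t.
  by move=> /(nthP 0) [r]; rewrite size_sL ltnS; exists r.
exists (size L), (nth 0 sL); split; last first.
  by move=> t tL; apply: sL_nth; rewrite mem_sort inE tL orbT.
split=> [|r rm|]; last by have /andP[] := sL_bounds _ (leqnn _).
- have [r rm sr0] : exists2 r, (r <= size L)%N & nth 0 sL r = 0.
    by apply: sL_nth; rewrite mem_sort mem_head.
  apply/eqP; rewrite eq_le; have /andP[-> _] := sL_bounds _ (leq0n (size L)).
  by rewrite -[X in _ <= X]sr0 sL_le.
- by apply: sL_le; rewrite leqnSn.
Qed.

End cumulative_intensity.

Section block_patterns.
Variables (X : eqType) (dir : bool) (n Q : nat).

Definition same_pair (q l q' l' : 'I_Q) : Prop :=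
  (q = q' /\ l = l') \/ (~~ dir /\ q = l' /\ l = q').

Definition pair_injective (A : 'I_Q -> 'I_Q -> X) : Prop :=
  forall q l q' l', A q l = A q' l' -> same_pair q l q' l'.

Definition pattern (A : 'I_Q -> 'I_Q -> X) (z : {ffun 'I_n -> 'I_Q}) :
  'I_n -> 'I_n -> X := fun i j => A (z i) (z j).

Definition has_pattern (A : 'I_Q -> 'I_Q -> X) (z : {ffun 'I_n -> 'I_Q})
    (y : 'I_n -> 'I_n -> X) : bool :=
  [forall i, forall j, is_dyad dir i j ==> (A (z i) (z j) == y i j)].

Lemma has_patternP A (z : {ffun 'I_n -> 'I_Q}) (y : 'I_n -> 'I_n -> X) :
  reflect (forall i j, is_dyad dir i j -> A (z i) (z j) = y i j) (has_pattern A z y).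
Proof.
apply: (iffP forallP) => [zy i j dij|zy i].
  by have /forallP/(_ j)/implyP/(_ dij)/eqP := zy i.
by apply/forallP => j; apply/implyP => dij; apply/eqP/zy.
Qed.

Lemma has_pattern_pattern A A' (z z' : {ffun 'I_n -> 'I_Q}) y :
  has_pattern A z (pattern A' z') -> has_pattern A' z' y -> has_pattern A z y.
Proof.
move=> /has_patternP zz' /has_patternP z'y; apply/has_patternP => i j dij.
by rewrite zz' // /pattern z'y.
Qed.

Lemma same_pairC q l q' l' : same_pair q l q' l' -> same_pair l q l' q'.
Proof. by case=> [[-> ->]|[d [-> ->]]]; [left|right]. Qed.

Lemma same_pair_diag q l c : same_pair q l c c -> q = c /\ l = c.
Proof. by case=> [[-> ->]|[_ [-> ->]]]. Qed.

Lemma same_pair_triangle a b c a' b' c' :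
  same_pair a b a' b' -> same_pair a c a' c' -> same_pair b c b' c' -> a = a'.
Proof.
case=> [[//]|[_ [-> ->]]]; case=> [[//]|[_ [-> ->]]].
by case=> [[-> _]|[_ [-> _]]].
Qed.

Lemma dyad_ltn (i j : 'I_n) : (i < j)%N -> is_dyad dir i j.
Proof. by rewrite /is_dyad; case: dir => // ij; rewrite neq_ltn ij. Qed.

Lemma same_pair_neq (y1 y2 : 'I_n -> 'I_Q) :
  (forall i j, is_dyad dir i j -> same_pair (y1 i) (y1 j) (y2 i) (y2 j)) ->
  forall i j, i != j -> same_pair (y1 i) (y1 j) (y2 i) (y2 j).
Proof.
move=> y12 i j; rewrite neq_ltn => /orP[ij|ji]; first exact/y12/dyad_ltn.
exact/same_pairC/y12/dyad_ltn.
Qed.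

Lemma pair_injective_comp A (s : 'I_Q -> 'I_Q) :
  injective s -> pair_injective A -> pair_injective (fun q l => A (s q) (s l)).
Proof.
by move=> s_inj A_inj q l q' l' /A_inj [[/s_inj -> /s_inj ->]|[d [/s_inj -> /s_inj ->]]];
  [left|right].
Qed.

Lemma pair_injective_diag A q q' : pair_injective A -> A q q = A q' q' -> q = q'.
Proof. by move=> A_inj /A_inj /same_pair_diag[]. Qed.

Hypothesis n_ge3 : (3 <= n)%N.

Let i0 : 'I_n := Ordinal (leq_trans (isT : 0 < 3)%N n_ge3).
Let i1 : 'I_n := Ordinal (leq_trans (isT : 1 < 3)%N n_ge3).
Let i2 : 'I_n := Ordinal (leq_trans (isT : 2 < 3)%N n_ge3).

Lemma two_others (i : 'I_n) : exists j k, [/\ i != j, i != k & j != k].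
Proof.
have [->|ni0] := eqVneq i i0; first by exists i1, i2.
have [->|ni1] := eqVneq i i1; first by exists i0, i2.
by exists i0, i1.
Qed.

Lemma ffun_eq_same_pairs (y1 y2 : {ffun 'I_n -> 'I_Q}) :
  (forall i j, is_dyad dir i j -> same_pair (y1 i) (y1 j) (y2 i) (y2 j)) -> y1 = y2.
Proof.
move=> /same_pair_neq y12; apply/ffunP => i.
have [j [k [ij ik jk]]] := two_others i.
exact: same_pair_triangle (y12 _ _ ij) (y12 _ _ ik) (y12 _ _ jk).
Qed.

Lemma const_same_pairs (y : 'I_n -> 'I_Q) :
  (forall i j i' j', is_dyad dir i j -> is_dyad dir i' j' ->
     same_pair (y i) (y j) (y i') (y j')) -> forall i, y i = y i0.
Proof.
move=> yy; have d12 : is_dyad dir i1 i2 by exact: dyad_ltn.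
have [y01 y12] : y i0 = y i1 /\ y i1 = y i2.
  have := yy _ _ _ _ (dyad_ltn (isT : i0 < i1)%N) d12.
  have := yy _ _ _ _ (dyad_ltn (isT : i0 < i2)%N) d12.
  by case=> [[e _]|[_ [e e']]] [[e1 e2]|[_ [e1 e2]]]; split; congruence.
move=> i; have [->//|ni] := eqVneq i i0.
have d0i : is_dyad dir i0 i.
  by apply: dyad_ltn; rewrite lt0n; apply: contra_neq ni => e; exact: val_inj.
have := yy _ _ _ _ d0i d12; rewrite -y12 => /same_pair_diag [_ ->].
by rewrite y01.
Qed.

Lemma has_pattern_inj A y (z1 z2 : {ffun 'I_n -> 'I_Q}) : pair_injective A ->
  has_pattern A z1 y -> has_pattern A z2 y -> z1 = z2.
Proof.
move=> A_inj /has_patternP z1y /has_patternP z2y; apply: ffun_eq_same_pairs => i j dij.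
by apply: A_inj; rewrite z1y // z2y.
Qed.

Lemma has_pattern_cst A (z : {ffun 'I_n -> 'I_Q}) b : pair_injective A ->
  has_pattern A z (pattern A [ffun=> b]) = (z == [ffun=> b]).
Proof.
move=> A_inj; apply/idP/eqP => [zb|->]; last exact/has_patternP.
by apply: (has_pattern_inj A_inj zb); apply/has_patternP.
Qed.

End block_patterns.

Section label_switching.
Variables (R : realType) (X : eqType) (dir : bool) (n Q : nat).
Hypothesis n_ge3 : (3 <= n)%N.
Implicit Types (A : 'I_Q -> 'I_Q -> X) (pi : 'I_Q -> R).

Definition same_pattern_law A pi A' pi' : Prop :=
  forall y : 'I_n -> 'I_n -> X,
    \sum_(z | has_pattern dir A z y) \prod_(i < n) pi (z i) =
    \sum_(z | has_pattern dir A' z y) \prod_(i < n) pi' (z i).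

Lemma same_pattern_law_sym A pi A' pi' :
  same_pattern_law A pi A' pi' -> same_pattern_law A' pi' A pi.
Proof. by move=> law y; rewrite law. Qed.

Lemma pattern_law_support A pi A' pi' : (forall q, 0 < pi' q) ->
  same_pattern_law A pi A' pi' ->
  forall z' : {ffun 'I_n -> 'I_Q}, exists z, has_pattern dir A z (pattern A' z').
Proof.
move=> pi'_gt0 law z'; have [z|none] := pickP (has_pattern dir A ^~ (pattern A' z')).
  by exists z.
have w_gt0 (z : {ffun 'I_n -> 'I_Q}) : 0 < \prod_(i < n) pi' (z i) by exact: prodr_gt0.
have := law (pattern A' z'); rewrite big_pred0 // (bigD1 z') /=; last exact/has_patternP.
move=> /esym/eqP; rewrite paddr_eq0 ?sumr_ge0 ?ltW // => [/andP[]|z _].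
  by rewrite gt_eqF.
exact/ltW.
Qed.

Variables (A A' : 'I_Q -> 'I_Q -> X).
Hypothesis A_inj : pair_injective dir A.

Lemma same_pattern_law_cst pi pi' q c : (forall q, 0 <= pi q) -> (forall q, 0 <= pi' q) ->
  pair_injective dir A' -> A' q q = A c c -> same_pattern_law A pi A' pi' -> pi' q = pi c.
Proof.
move=> pi_ge0 pi'_ge0 A'_inj qc law.
have cq : pattern A [ffun=> c] = pattern A' [ffun=> q] :> ('I_n -> 'I_n -> X).
  by apply/funext => i; apply/funext => j; rewrite /pattern !ffunE.
have := law (pattern A [ffun=> c]).
rewrite (big_pred1 [ffun=> c]) => [|z]; last by rewrite (has_pattern_cst n_ge3).
rewrite cq (big_pred1 [ffun=> q]) => [|z]; last by rewrite (has_pattern_cst n_ge3).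
under eq_bigr do rewrite ffunE; under [RHS]eq_bigr do rewrite ffunE.
rewrite !prodr_const card_ord => /eqP; rewrite eqrXn2 ?(leq_trans _ n_ge3) //.
by move=> /eqP.
Qed.

Let i0 : 'I_n := Ordinal (leq_trans (isT : 0 < 3)%N n_ge3).
Let i1 : 'I_n := Ordinal (leq_trans (isT : 1 < 3)%N n_ge3).
Let i2 : 'I_n := Ordinal (leq_trans (isT : 2 < 3)%N n_ge3).
Let d01 : is_dyad dir i0 i1 := dyad_ltn dir (isT : i0 < i1)%N.
Let d02 : is_dyad dir i0 i2 := dyad_ltn dir (isT : i0 < i2)%N.
Let d12 : is_dyad dir i1 i2 := dyad_ltn dir (isT : i1 < i2)%N.

Section pattern_transfer.
Variable Phi : {ffun 'I_n -> 'I_Q} -> {ffun 'I_n -> 'I_Q}.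
Hypothesis PhiP : forall z, has_pattern dir A (Phi z) (pattern A' z).
Hypothesis Phi_inj : injective Phi.

Definition transferred_label (q : 'I_Q) : 'I_Q := Phi [ffun=> q] i0.
Local Notation sg := transferred_label.

Lemma transfer_cst q : Phi [ffun=> q] = [ffun=> sg q].
Proof.
apply/ffunP => i; rewrite ffunE; apply: const_same_pairs => // a b a' b' dab dab'.
have /has_patternP Pq := PhiP [ffun=> q].
by apply: A_inj; rewrite !Pq // /pattern !ffunE.
Qed.

Lemma transferred_label_inj : injective sg.
Proof.
move=> q l e; have /Phi_inj : Phi [ffun=> q] = Phi [ffun=> l] by rewrite !transfer_cst e.
by move/ffunP/(_ i0); rewrite !ffunE.
Qed.

Lemma transferred_diag q : A' q q = A (sg q) (sg q).
Proof.
have /has_patternP := PhiP [ffun=> q]; rewrite transfer_cst /pattern.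
by move=> /(_ _ _ d01); rewrite !ffunE.
Qed.

Lemma transfer_at_const_pair (z : {ffun 'I_n -> 'I_Q}) (i j : 'I_n) q :
  is_dyad dir i j -> z i = q -> z j = q -> Phi z i = sg q /\ Phi z j = sg q.
Proof.
move=> dij zi zj; apply: same_pair_diag; apply: A_inj.
by have /has_patternP -> := PhiP z; rewrite // /pattern zi zj transferred_diag.
Qed.

Lemma transferred_pair q l : A' q l = A (sg q) (sg l).
Proof.
pose z1 : {ffun 'I_n -> 'I_Q} := [ffun i => if i == i0 then q else l].
have [z1_1 _] : Phi z1 i1 = sg l /\ Phi z1 i2 = sg l.
  by apply: transfer_at_const_pair d12 _ _; rewrite ffunE.
have /has_patternP := PhiP z1 => /(_ _ _ d01).
rewrite /pattern !ffunE /= z1_1 => eq1.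
pose z2 : {ffun 'I_n -> 'I_Q} := [ffun i => if i == i2 then l else q].
have [z2_0 _] : Phi z2 i0 = sg q /\ Phi z2 i1 = sg q.
  by apply: transfer_at_const_pair d01 _ _; rewrite ffunE.
have /has_patternP := PhiP z2 => /(_ _ _ d02).
rewrite /pattern !ffunE /= z2_0 => eq2.
have [[e _]|[_ [_ /transferred_label_inj lq]]] := A_inj (etrans eq1 (esym eq2)).
  by rewrite -eq1 e.
by rewrite lq transferred_diag.
Qed.

End pattern_transfer.

Theorem label_switching pi pi' : (forall q, 0 < pi q) -> (forall q, 0 < pi' q) ->
  same_pattern_law A pi A' pi' ->
  exists s : {perm 'I_Q},
    (forall q, pi' q = pi (s q)) /\ (forall q l, A' q l = A (s q) (s l)).
Proof.
move=> pi_gt0 pi'_gt0 law.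
have [Phi PhiP] := fin_all_exists (pattern_law_support pi'_gt0 law).
have [Psi PsiP] := fin_all_exists (pattern_law_support pi_gt0 (same_pattern_law_sym law)).
have PsiK : cancel Psi Phi.
  move=> z; apply: (has_pattern_inj (y := pattern A z) n_ge3 A_inj).
    exact: has_pattern_pattern (PhiP _) (PsiP _).
  exact/has_patternP.
have Phi_inj := can_inj (canF_sym PsiK).
have sgA := transferred_pair PhiP Phi_inj.
have sg_inj := transferred_label_inj PhiP Phi_inj.
exists (perm sg_inj); split=> q *; rewrite ?permE; last exact: sgA.
have A'_inj : pair_injective dir A'.
  by move=> ? ? ? ?; rewrite !sgA; apply: pair_injective_comp.
apply: same_pattern_law_cst law => [?|?||]; [exact/ltW|exact/ltW|exact: A'_inj|].
exact: sgA.
Qed.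

End label_switching.

Section moments.
Variables (R : realType) (D : finType) (P : pred D) (K : Type).
Variables (mono : K -> (D -> R) -> R) (shift : K -> D -> K) (k0 : K).
Hypothesis mono_shift : forall k d x, P d -> mono (shift k d) x = x d * mono k x.
Hypothesis mono0 : forall x, mono k0 x = 1.
Variables (I : finType) (c : I -> R) (v : I -> D -> R).

Definition moments_vanish (G : I -> R) : Prop :=
  forall k, \sum_i c i * G i * mono k (v i) = 0.

Lemma moments_vanish_mul G d a : P d -> moments_vanish G ->
  moments_vanish (fun i => G i * (v i d - a)).
Proof.
move=> Pd G0 k; transitivity (\sum_i c i * G i * mono (shift k d) (v i) -
                              a * \sum_i c i * G i * mono k (v i)).
  by rewrite mulr_sumr -sumrB; apply: eq_bigr => i _; rewrite mono_shift //; ring.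
by rewrite !G0 mulr0 subr0.
Qed.

Lemma moments_vanish_prod (r : seq (D * R)) : all (P \o fst) r ->
  moments_vanish (fun=> 1) -> moments_vanish (fun i => \prod_(da <- r) (v i da.1 - da.2)).
Proof.
move=> rP m1; elim: r rP => [_|[d a] r IH /andP[Pd rP]] k.
  by rewrite -[RHS](m1 k); apply: eq_bigr => i _; rewrite big_nil.
rewrite -[RHS](moments_vanish_mul a Pd (IH rP) k); apply: eq_bigr => i _.
by rewrite big_cons /=; ring.
Qed.

(* Lagrange interpolation: the product over i of the factors x_d - v i d, with
   d a coordinate where v i differs from p, vanishes exactly off the fibre of p. *)
Lemma fibre_sum_eq0 : (forall k, \sum_i c i * mono k (v i) = 0) ->
  forall p : D -> R, \sum_(i | [forall d, P d ==> (v i d == p d)]) c i = 0.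
Proof.
move=> moments p; pose at_p i := [forall d, P d ==> (v i d == p d)].
pose sep i := [pick d | P d && (v i d != p d)].
have sepP i : ~~ at_p i -> exists2 d, sep i = Some d & P d && (v i d != p d).
  by rewrite /sep; case: pickP => [d|none /forallPn[d]]; [exists d|rewrite negb_imply none].
pose r := pmap (fun i => omap (fun d => (d, v i d)) (sep i)) (enum I).
have r_spec da : da \in r -> P da.1 /\ p da.1 != da.2.
  rewrite mem_pmap => /mapP[i _]; rewrite /sep; case: pickP => //= d /andP[Pd vd] [->].
  by rewrite eq_sym.
have rP : all (P \o fst) r by apply/allP => da /r_spec[].
have m1 : moments_vanish (fun=> 1).
  by move=> k; rewrite -[RHS](moments k); apply: eq_bigr => i _; rewrite mulr1.
have := moments_vanish_prod rP m1 k0.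
under eq_bigr do rewrite mono0 mulr1.
rewrite (bigID at_p) /= [X in _ + X]big1 ?addr0; last first.
  move=> j /sepP[d sep_j /andP[_ vd]].
  apply/eqP; rewrite mulf_eq0 prodf_seq_eq0; apply/orP; right; apply/hasP.
  exists (d, v j d); last by rewrite /= subrr.
  by rewrite mem_pmap; apply/mapP; exists j; rewrite ?mem_enum ?sep_j.
have g_neq0 : \prod_(da <- r) (p da.1 - da.2) != 0.
  by rewrite prodf_seq_neq0; apply/allP => da /r_spec[_]; rewrite subr_eq0.
rewrite (eq_bigr (fun j => c j * \prod_(da <- r) (p da.1 - da.2))); last first.
  move=> j /forallP pj; congr (_ * _); apply: eq_big_seq => da /r_spec[Pd _].
  by have /implyP/(_ Pd)/eqP -> := pj da.1.
rewrite -mulr_suml => /eqP; rewrite mulf_eq0 (negbTE g_neq0) orbF => /eqP; apply.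
Qed.

End moments.

Section dyad_products.
Variables (R : realType) (dir : bool) (n m : nat).

Definition dyad_prod (F : 'I_n -> 'I_n -> 'I_m -> R) : R :=
  \prod_(i < n) \prod_(j < n | is_dyad dir i j) \prod_(r < m) F i j r.

Lemma dyad_prodM F G :
  dyad_prod (fun i j r => F i j r * G i j r) = dyad_prod F * dyad_prod G.
Proof.
rewrite -big_split; apply: eq_bigr => i _; rewrite -big_split.
by apply: eq_bigr => j _; exact: big_split.
Qed.

Lemma dyad_prod_gt0 F : (forall i j r, 0 < F i j r) -> 0 < dyad_prod F.
Proof. by move=> F_gt0; do 3![apply: prodr_gt0 => ? _]. Qed.

Definition dyad_monomial (k : 'I_n -> 'I_n -> nat -> nat) (x : 'I_n * 'I_n * 'I_m -> R) :=
  dyad_prod (fun i j r => x (i, j, r) ^+ k i j r).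

Definition shift_exponent (k : 'I_n -> 'I_n -> nat -> nat) (d : 'I_n * 'I_n * 'I_m) :=
  fun i j r => (k i j r + [&& i == d.1.1, j == d.1.2 & r == d.2])%N.

Lemma dyad_monomial_shift k d x : is_dyad dir d.1.1 d.1.2 ->
  dyad_monomial (shift_exponent k d) x = x d * dyad_monomial k x.
Proof.
case: d => [[i0 j0] r0] /= d0; rewrite /dyad_monomial /shift_exponent.
transitivity (dyad_prod (fun i j r => x (i, j, r) ^+ k i j r *
    x (i, j, r) ^+ [&& i == i0, j == j0 & (r : nat) == r0])).
  by congr dyad_prod; do 3!apply/funext => ?; rewrite exprD.
rewrite dyad_prodM mulrC; congr (_ * _).
rewrite /dyad_prod (bigD1 i0) //= [X in _ * X]big1 ?mulr1 => [|i /negbTE ->]; last first.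
  by apply: big1 => j _; apply: big1 => r _; rewrite expr0.
rewrite (bigD1 j0) //= [X in _ * X]big1 ?mulr1 => [|j /andP[_ /negbTE ->]]; last first.
  by apply: big1 => r _; rewrite andbF expr0.
rewrite (bigD1 r0) //= !eqxx expr1 [X in _ * X]big1 ?mulr1 // => r /negbTE.
by rewrite val_eqE => ->; rewrite expr0.
Qed.

Lemma dyad_monomial0 x : dyad_monomial (fun _ _ _ => 0%N) x = 1.
Proof. by do 3![apply: big1 => ? _]; rewrite expr0. Qed.

End dyad_products.

Section finite_dimensional_laws.
Variables (R : realType) (dir : bool) (n Q m : nat) (s : nat -> R).
Implicit Types (pi : 'I_Q -> R) (alpha : 'I_Q -> 'I_Q -> R -> R).
Implicit Types (k : 'I_n -> 'I_n -> nat -> nat) (z : {ffun 'I_n -> 'I_Q}).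

Definition increments (f : R -> R) : {ffun 'I_m -> R} :=
  [ffun r : 'I_m => cumint f (s r) (s r.+1)].

Definition increment_labels alpha : 'I_Q -> 'I_Q -> {ffun 'I_m -> R} :=
  fun q l => increments (alpha q l).

Definition increment_point alpha z (d : 'I_n * 'I_n * 'I_m) : R :=
  increments (alpha (z d.1.1) (z d.1.2)) d.2.

Definition pattern_point (y : 'I_n -> 'I_n -> {ffun 'I_m -> R})
    (d : 'I_n * 'I_n * 'I_m) : R :=
  y d.1.1 d.1.2 d.2.

Definition poisson_weight (x : 'I_n * 'I_n * 'I_m -> R) : R :=
  dyad_prod dir (fun i j r => expR (- x (i, j, r))).

Definition assignment_weight pi alpha z : R :=
  \prod_(i < n) pi (z i) * poisson_weight (increment_point alpha z).

Definition inv_fact_prod k : R :=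
  dyad_prod dir (fun i j (r : 'I_m) => (k i j r)`!%:R^-1).

Lemma inv_fact_prod_neq0 k : inv_fact_prod k != 0.
Proof. by apply/lt0r_neq0/dyad_prod_gt0 => i j r; rewrite invr_gt0 ltr0n fact_gt0. Qed.

Lemma fdd_expansion pi alpha k : fdd dir pi alpha m s k =
  inv_fact_prod k * \sum_z assignment_weight pi alpha z *
                           dyad_monomial dir k (increment_point alpha z).
Proof.
rewrite /fdd mulr_sumr; apply: eq_bigr => z _.
transitivity (\prod_(i < n) pi (z i) * dyad_prod dir (fun i j r =>
  (k i j r)`!%:R^-1 * (expR (- increment_point alpha z (i, j, r)) *
                       increment_point alpha z (i, j, r) ^+ k i j r))).
  congr (_ * _); do 3![apply: eq_bigr => ? _].
  by rewrite /pois_pmf /increment_point /increments ffunE; ring.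
rewrite !dyad_prodM /assignment_weight /poisson_weight /inv_fact_prod /dyad_monomial; ring.
Qed.

Lemma increment_point_at alpha z y :
  [forall d, is_dyad dir d.1.1 d.1.2 ==> (increment_point alpha z d == pattern_point y d)] =
  has_pattern dir (increment_labels alpha) z y.
Proof.
apply/forallP/has_patternP => [zy i j dij|zy [[i j] r]].
  by apply/ffunP => r; have /implyP/(_ dij)/eqP := zy (i, j, r).
by apply/implyP => /= dij; rewrite /increment_point /pattern_point -zy.
Qed.

Lemma assignment_weight_pattern pi alpha z y :
  has_pattern dir (increment_labels alpha) z y ->
  assignment_weight pi alpha z = \prod_(i < n) pi (z i) * poisson_weight (pattern_point y).
Proof.
move=> /has_patternP zy; congr (_ * _); do 2![apply: eq_bigr => ? ?].
by apply: eq_bigr => r _; rewrite /increment_point /pattern_point /= -zy.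
Qed.

Lemma same_pattern_law_of_fdd pi alpha pi' alpha' :
  (forall k, fdd dir pi alpha m s k = fdd dir pi' alpha' m s k) ->
  same_pattern_law dir n (increment_labels alpha) pi (increment_labels alpha') pi'.
Proof.
move=> law y; pose I := ({ffun 'I_n -> 'I_Q} + {ffun 'I_n -> 'I_Q})%type.
pose c (i : I) := match i with inl z => assignment_weight pi alpha z
                             | inr z => - assignment_weight pi' alpha' z end.
pose v (i : I) := match i with inl z => increment_point alpha z
                             | inr z => increment_point alpha' z end.
have moments k : \sum_i c i * dyad_monomial dir k (v i) = 0.
  rewrite big_sumType /=; under [X in _ + X]eq_bigr do rewrite mulNr.
  rewrite sumrN; apply/eqP; rewrite subr_eq0; apply/eqP.
  by apply: (mulfI (inv_fact_prod_neq0 k)); rewrite -!fdd_expansion.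
have := fibre_sum_eq0 (@dyad_monomial_shift R dir n m) (@dyad_monomial0 R dir n m)
  moments (pattern_point y).
rewrite big_sumType /= !(eq_bigl _ _ (fun z => increment_point_at _ z y)).
have fibre pi0 alpha0 :
    \sum_(z | has_pattern dir (increment_labels alpha0) z y)
      assignment_weight pi0 alpha0 z =
    (\sum_(z | has_pattern dir (increment_labels alpha0) z y) \prod_(i < n) pi0 (z i)) *
    poisson_weight (pattern_point y).
  by rewrite mulr_suml; apply: eq_bigr => z /assignment_weight_pattern.
rewrite sumrN !fibre => /eqP; rewrite subr_eq0 => /eqP /mulIf; apply.
by apply/lt0r_neq0/dyad_prod_gt0 => *; exact: expR_gt0.
Qed.

End finite_dimensional_laws.

Section identifiability.
Variables (R : realType) (dir : bool) (n Q : nat) (T : R).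
Hypotheses (n_ge3 : (3 <= n)%N) (T_ge0 : 0 <= T).
Notation mu := (@lebesgue_measure R).

Definition cumint_profile (L : seq R) (f : R -> R) : seq R := [seq cumint f 0 t | t <- L].

Lemma cumint_profile_increments m s (L : seq R) (f g : R -> R) : grid T m s ->
  (forall t, t \in L -> exists2 r, (r <= m)%N & s r = t) ->
  mu.-integrable `[0, T] (EFin \o f) -> mu.-integrable `[0, T] (EFin \o g) ->
  increments m s f = increments m s g -> cumint_profile L f = cumint_profile L g.
Proof.
move=> gs L_grid fi gi fg; apply/eq_in_map => _ /L_grid[r rm <-].
rewrite (cumint_grid gs fi rm) (cumint_grid gs gi rm); apply: eq_bigr => u _.
have um : (u < m)%N by exact: leq_trans (ltn_ord u) rm.
by have := congr1 (fun F : {ffun _ -> R} => F (Ordinal um)) fg; rewrite !ffunE.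
Qed.

Lemma distinct_pairs (q l q' l' : 'I_Q) : ~ same_pair dir q l q' l' ->
  if dir then (q, l) != (q', l') else ((q, l) != (q', l')) && ((q, l) != (l', q')).
Proof.
move=> nsp; have ne (a b c d : 'I_Q) : (a = c /\ b = d -> False) -> (a, b) != (c, d).
  by move=> abcd; apply/eqP => -[ac bd]; exact: abcd.
case: dir nsp => nsp; first by apply: ne => e; apply: nsp; left.
by apply/andP; split; apply: ne => -[e1 e2]; apply: nsp; [left|right].
Qed.

Lemma separating_times (alpha : 'I_Q -> 'I_Q -> R -> R) :
  (forall q l, mu.-integrable `[0, T] (EFin \o alpha q l)) ->
  distinct_intensities dir T alpha ->
  exists2 L, (forall t, t \in L -> 0 <= t <= T) &
             pair_injective dir (fun q l => cumint_profile L (alpha q l)).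
Proof.
move=> alpha_int dist.
have witness (x : 'I_Q * 'I_Q * 'I_Q * 'I_Q) : exists t, 0 <= t <= T /\
    (~ same_pair dir x.1.1.1 x.1.1.2 x.1.2 x.2 ->
     cumint (alpha x.1.1.1 x.1.1.2) 0 t <> cumint (alpha x.1.2 x.2) 0 t).
  case: x => [[[q l] q'] l'] /=; have [sp|nsp] := pselect (same_pair dir q l q' l').
    by exists 0; rewrite lexx T_ge0.
  have := dist _ _ _ _ (distinct_pairs nsp).
  move=> /(contra_not (ae_eq_on_cumint (alpha_int _ _) (alpha_int _ _))).
  by move=> /existsNP[t /not_implyP[tT ne]]; exists t.
have [tx txP] := fin_all_exists witness.
exists [seq tx x | x <- enum {: 'I_Q * 'I_Q * 'I_Q * 'I_Q}].
  by move=> _ /mapP[x _ ->]; have [] := txP x.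
move=> q l q' l' /eq_in_map e; apply: contrapT => nsp.
by have [_ /(_ nsp)] := txP (q, l, q', l'); apply; apply/e/map_f; rewrite mem_enum.
Qed.

Variables (pi pi' : 'I_Q -> R) (alpha alpha' : 'I_Q -> 'I_Q -> R -> R).
Hypotheses (vp : valid_param dir T pi alpha) (vp' : valid_param dir T pi' alpha').
Hypothesis law : same_law dir n T pi alpha pi' alpha'.

Lemma label_switching_on_times (L : seq R) : (forall t, t \in L -> 0 <= t <= T) ->
  pair_injective dir (fun q l => cumint_profile L (alpha q l)) ->
  exists sg : {perm 'I_Q}, (forall q, pi' q = pi (sg q)) /\
    forall q l, cumint_profile L (alpha' q l) = cumint_profile L (alpha (sg q) (sg l)).
Proof.
move=> LT L_inj.
have [pi_gt0 _ _ alpha_int _] := vp; have [pi'_gt0 _ _ alpha'_int _] := vp'.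
have [m [s [gs L_grid]]] := grid_through T_ge0 LT.
have [s0 s_step smT] := gs.
have incr_law := same_pattern_law_of_fdd (fun k => law k s0 s_step smT).
have incr_inj : pair_injective dir (increment_labels m s alpha).
  move=> q l q' l'.
  by move=> /(cumint_profile_increments gs L_grid (alpha_int _ _) (alpha_int _ _)) /L_inj.
have [sg [pi_sg alpha_sg]] := label_switching n_ge3 incr_inj pi_gt0 pi'_gt0 incr_law.
exists sg; split=> // q l.
exact: cumint_profile_increments gs L_grid (alpha'_int _ _) (alpha_int _ _) (alpha_sg q l).
Qed.

Lemma label_switching_cumint (L0 : seq R) : (forall t, t \in L0 -> 0 <= t <= T) ->
  pair_injective dir (fun q l => cumint_profile L0 (alpha q l)) ->
  exists sg : {perm 'I_Q}, (forall q, pi' q = pi (sg q)) /\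
    forall q l t, 0 <= t <= T -> cumint (alpha' q l) 0 t = cumint (alpha (sg q) (sg l)) 0 t.
Proof.
move=> L0T L0_inj; have [sg [pi_sg alpha_sg]] := label_switching_on_times L0T L0_inj.
exists sg; split=> // q l t tT.
have tL0T u : u \in t :: L0 -> 0 <= u <= T by rewrite inE => /orP[/eqP ->|/L0T].
have tL0_inj : pair_injective dir (fun q l => cumint_profile (t :: L0) (alpha q l)).
  by move=> ? ? ? ? [_ /L0_inj].
have [sg' [_ alpha_sg']] := label_switching_on_times tL0T tL0_inj.
(* The permutation is unique since L0 already separates the pairs. *)
have sg'E q0 : sg' q0 = sg q0.
  apply: (pair_injective_diag L0_inj).
  by have [_ <-] := alpha_sg' q0 q0; rewrite alpha_sg.
by have [+ _] := alpha_sg' q l; rewrite !sg'E.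
Qed.

End identifiability.

Unset Implicit Arguments.

Theorem proposition1 (R : realType) (directed : bool) (n Q : nat) (T : R)
    (pi : 'I_Q -> R) (alpha : 'I_Q -> 'I_Q -> R -> R) :
  (3 <= n)%N -> (1 <= Q)%N -> 0 < T ->
  valid_param directed T pi alpha ->
  distinct_intensities directed T alpha ->
  forall (pi' : 'I_Q -> R) (alpha' : 'I_Q -> 'I_Q -> R -> R),
    valid_param directed T pi' alpha' ->
    same_law directed n T pi alpha pi' alpha' ->
    exists sigma : {perm 'I_Q},
      (forall q, pi q = pi' (sigma q)) /\
      (forall q l, ae_eq_on T (alpha q l) (alpha' (sigma q) (sigma l))).
Proof.
move=> n_ge3 _ T_gt0 vp dist pi' alpha' vp' law.
have T_ge0 := ltW T_gt0; have [_ _ _ alpha_int _] := vp; have [_ _ _ alpha'_int _] := vp'.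
have [L0 L0T L0_inj] := separating_times T_ge0 alpha_int dist.
have [sg [pi_sg alpha_sg]] := label_switching_cumint n_ge3 T_ge0 vp vp' law L0T L0_inj.
exists sg^-1%g; split=> [q|q l]; first by rewrite pi_sg permKV.
apply: ae_eq_on_cumint (alpha_int _ _) (alpha'_int _ _) _ => t tT.
by rewrite alpha_sg // !permKV.
Qed.
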